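(* Let $K$ be a field of characteristic zero and $S=K[X_0,X_1,Y_0,Y_1]$ with the bigrading $\deg X_0=\deg X_1=(1,0)$, $\deg Y_0=\deg Y_1=(0,1)$. Let $\mathbb{Y}=\sum_{(i,j)\in D_{\mathbb{X}}} m_{ij}P_{ij}$ be a fat point scheme in $\mathbb{P}^1\times\mathbb{P}^1$ with vanishing ideal $I_{\mathbb{Y}}=\bigcap_{(i,j)\in D_{\mathbb{X}}}\wp_{ij}^{m_{ij}}$, let $(i,j)\in D_{\mathbb{X}}$, and let $G\in S$ be a separator of $P_{ij}$ in $\mathbb{Y}$, i.e. a bihomogeneous element with $G\in \wp_{ij}^{m_{ij}-1}\setminus \wp_{ij}^{m_{ij}}$ and $G\in \wp_{kl}^{m_{kl}}$ for all $(k,l)\in D_{\mathbb{X}}\setminus\{(i,j)\}$. Then the ideal $I_{\mathbb{Y}}+\langle G\rangle$ defines a subscheme of $\mathbb{Y}$ of degree $\deg(\mathbb{Y})-1$.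
   Context: A point $P=[a_0:a_1]\times[b_0:b_1]\in\mathbb{P}^1\times\mathbb{P}^1$ (over $K$) has vanishing ideal $\langle a_1X_0-a_0X_1,\ b_1Y_0-b_0Y_1\rangle\subseteq S$. For a finite set $\mathbb{X}$ of distinct points of $\mathbb{P}^1\times\mathbb{P}^1$, write $\pi_1(\mathbb{X})=\{Q_1,\dots,Q_r\}$ for the distinct first coordinates, $\pi_2(\mathbb{X})=\{R_1,\dots,R_t\}$ for the distinct second coordinates, $P_{ij}=Q_i\times R_j$, $D_{\mathbb{X}}=\{(i,j)\mid P_{ij}\in\mathbb{X}\}$, and $\wp_{ij}$ the vanishing ideal of $P_{ij}$. For positive integers $m_{ij}$, the fat point scheme $\mathbb{Y}=\sum m_{ij}P_{ij}$ is the subscheme defined by $I_{\mathbb{Y}}=\bigcap\wp_{ij}^{m_{ij}}$. The degree of a zero-dimensional subscheme $\mathbb{Z}$ of $\mathbb{P}^1\times\mathbb{P}^1$ defined by a bihomogeneous ideal $I$ is the value $\dim_K (S/I)_{a,b}$ for all $a,b\gg0$ (for $\mathbb{Y}$ it equals $\sum\binom{m_{ij}+1}{2}$). *)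

From HB Require Import structures.
From mathcomp Require Import all_boot all_order all_algebra.
From mathcomp Require Import mpoly.
Set Implicit Arguments. Unset Strict Implicit. Unset Printing Implicit Defensive.
Import GRing.Theory.
Local Open Scope ring_scope.

Notation S K := {mpoly K[4]}.
Definition iX0 : 'I_4 := @Ordinal 4 0 isT.
Definition iX1 : 'I_4 := @Ordinal 4 1 isT.
Definition iY0 : 'I_4 := @Ordinal 4 2 isT.
Definition iY1 : 'I_4 := @Ordinal 4 3 isT.

Section Defs.
Variable K : fieldType.

Definition bihom (f : S K) (a b : nat) : Prop :=
  forall mm, mm \in msupp f ->
    (mm iX0 + mm iX1 = a)%N /\ (mm iY0 + mm iY1 = b)%N.

Definition in_ideal (gens : seq (S K)) (f : S K) : Prop :=
  exists c : seq (S K), size c = size gens /\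
    f = \sum_(i < size gens) c`_i * gens`_i.

Fixpoint pow_gens (gens : seq (S K)) (m : nat) : seq (S K) :=
  if m is m'.+1 then [seq g * h | g <- gens, h <- pow_gens gens m'] else [:: 1].

(* vanishing ideal of [a0:a1] x [b0:b1]: < a1 X0 - a0 X1, b1 Y0 - b0 Y1 > *)
Definition pt_gens (P : (K * K) * (K * K)) : seq (S K) :=
  [:: P.1.2 *: 'X_iX0 - P.1.1 *: 'X_iX1; P.2.2 *: 'X_iY0 - P.2.1 *: 'X_iY1].

Definition in_pt_pow (P : (K * K) * (K * K)) (m : nat) (f : S K) : Prop :=
  in_ideal (pow_gens (pt_gens P) m) f.

(* dim_K (S/J)_{a,b} = d : there are d bihomogeneous elements of bidegree (a,b)
   whose classes form a K-basis of S_{a,b} / (J cap S_{a,b}). *)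
Definition quot_dim (J : S K -> Prop) (a b d : nat) : Prop :=
  exists s : 'I_d -> S K,
    (forall i, bihom (s i) a b) /\
    (forall c : 'I_d -> K, J (\sum_(i < d) c i *: s i) -> forall i, c i = 0) /\
    (forall f, bihom f a b -> exists c : 'I_d -> K, J (f - \sum_(i < d) c i *: s i)).

(* the zero-dimensional subscheme defined by J has degree e:
   dim_K (S/J)_{a,b} = e for all a,b >> 0 *)
Definition scheme_degree (J : S K -> Prop) (e : nat) : Prop :=
  exists N : nat, forall a b : nat, (N <= a)%N -> (N <= b)%N -> quot_dim J a b e.

End Defs.

(* Move a point P of P^1 x P^1 by a bigraded linear change of coordinates
   [chart P] to the base point [1:0]x[1:0]; the generators of its ideal p_P
   become multiples of X1 and Y1. Then f lies in p_P^k iff f, in the new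
   coordinates, has no monomial of degree < k in X1, Y1: for f of bidegree
   (a,b), iff the coefficients of X0^(a-s) X1^s Y0^(b-u) Y1^u vanish for
   s + u < k. Hence (I_Y)_(a,b) is the common kernel of
   sum binomial(m_kl + 1, 2) linear functionals. For a, b large they are
   independent: products of powers of the lines through the points of the grid
   give elements on which they are triangular, ordered by m_kl - s - u.
   A separator G vanishes to order exactly m_ij - 1 at P_ij, so every
   functional takes on h G the value (constant term of h at P_ij) times its
   value on one fixed multiple of G, and one of these values is nonzero:
   adding G to I_Y removes exactly one condition. *)

From HB Require Import structures.
From mathcomp Require Import all_boot all_order all_algebra.
From mathcomp Require Import mpoly.
From mathcomp Require Import zify ring.
Import GRing.Theory.
Local Open Scope ring_scope.

Set Implicit Arguments. Unset Strict Implicit. Unset Printing Implicit Defensive.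

Lemma ord4_ind (P : 'I_4 -> Prop) : P iX0 -> P iX1 -> P iY0 -> P iY1 -> forall i, P i.
Proof. by move=> ? ? ? ? [[|[|[|[|//]]]] Hi]; rewrite (bool_irrelevance Hi isT). Qed.

Lemma big_ord4 (R : comPzRingType) (F : 'I_4 -> R) :
  \prod_(i < 4) F i = F iX0 * F iX1 * F iY0 * F iY1.
Proof.
rewrite !big_ord_recl big_ord0 mulr1 !mulrA.
by congr (F _ * F _ * F _ * F _); apply: val_inj.
Qed.

Definition mon4 (A B C E : nat) : 'X_{1..4} := [multinom nth 0%N [:: A; B; C; E] i | i < 4].

Lemma mon4X0 A B C E : mon4 A B C E iX0 = A. Proof. by rewrite mnmE. Qed.
Lemma mon4X1 A B C E : mon4 A B C E iX1 = B. Proof. by rewrite mnmE. Qed.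
Lemma mon4Y0 A B C E : mon4 A B C E iY0 = C. Proof. by rewrite mnmE. Qed.
Lemma mon4Y1 A B C E : mon4 A B C E iY1 = E. Proof. by rewrite mnmE. Qed.
Definition mon4E := (mon4X0, mon4X1, mon4Y0, mon4Y1).

Lemma mnm4P (e e' : 'X_{1..4}) :
  e iX0 = e' iX0 -> e iX1 = e' iX1 -> e iY0 = e' iY0 -> e iY1 = e' iY1 -> e = e'.
Proof. by move=> *; apply/mnmP; apply: ord4_ind. Qed.

Section Bihomogeneous.
Variable K : fieldType.
Local Notation S := {mpoly K[4]}.
Implicit Types (f g : S).

Lemma bihom_eqdeg f a b a' b' : bihom f a b -> a = a' -> b = b' -> bihom f a' b'.
Proof. by move=> h <- <-. Qed.

Lemma bihom0 a b : bihom (0 : S) a b.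
Proof. by move=> e; rewrite -mpolyC0 msupp0. Qed.

Lemma bihom1 : bihom (1 : S) 0 0.
Proof. by move=> e; rewrite msupp1 inE => /eqP ->; rewrite !mnm0E. Qed.

Lemma bihomD f g a b : bihom f a b -> bihom g a b -> bihom (f + g) a b.
Proof. by move=> hf hg e /msuppD_le; rewrite mem_cat => /orP [/hf|/hg]. Qed.

Lemma bihomZ c f a b : bihom f a b -> bihom (c *: f) a b.
Proof. by move=> hf e /msuppZ_le /hf. Qed.

Lemma bihomB f g a b : bihom f a b -> bihom g a b -> bihom (f - g) a b.
Proof. by move=> hf hg; rewrite -scaleN1r; apply/bihomD/bihomZ. Qed.

Lemma bihomM f g a b c d : bihom f a b -> bihom g c d -> bihom (f * g) (a + c) (b + d).
Proof.
move=> hf hg e /msuppM_le /allpairsP [[e1 e2] /= [/hf [h1 h2] /hg [h3 h4] ->]].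
by rewrite !mnmDE; split; lia.
Qed.

Lemma bihomXn f a b n : bihom f a b -> bihom (f ^+ n) (n * a) (n * b).
Proof.
move=> hf; elim: n => [|n IH]; first exact: bihom1.
by rewrite exprS !mulSn; apply: bihomM.
Qed.

Lemma bihom_sum (I : Type) (s : seq I) (P : pred I) (F : I -> S) a b :
  (forall k, P k -> bihom (F k) a b) -> bihom (\sum_(k <- s | P k) F k) a b.
Proof.
move=> hF; apply: (big_ind (fun x : S => bihom x a b)) => //; first exact: bihom0.
by move=> x y; apply: bihomD.
Qed.

Lemma bihom_prod (I : Type) (s : seq I) (P : pred I) (F : I -> S) da db :
  (forall k, P k -> bihom (F k) (da k) (db k)) ->
  bihom (\prod_(k <- s | P k) F k) (\sum_(k <- s | P k) da k) (\sum_(k <- s | P k) db k).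
Proof.
move=> hF; elim: s => [|x s IH]; first by rewrite !big_nil; exact: bihom1.
by rewrite !big_cons; case: ifP => // Px; apply: bihomM => //; apply: hF.
Qed.

Lemma bihomXm (e : 'X_{1..4}) : bihom ('X_[e] : S) (e iX0 + e iX1) (e iY0 + e iY1).
Proof. by move=> e' /mem_msuppXP <-. Qed.

Lemma bihomX i : bihom ('X_i : S) ((i == iX0) + (i == iX1)) ((i == iY0) + (i == iY1)).
Proof. by have := bihomXm (e := U_(i)%MM); rewrite !mnm1E. Qed.

End Bihomogeneous.

Section Ideals.
Variable K : fieldType.
Local Notation S := {mpoly K[4]}.
Implicit Types (f g x y : S) (gens : seq S).

Lemma in_idealP gens f :
  (exists c : 'I_(size gens) -> S, f = \sum_i c i * gens`_i) <-> in_ideal gens f.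
Proof.
split; last by case=> c [_ ->]; exists (fun i => c`_i).
case=> c ->; exists [seq c i | i <- enum 'I_(size gens)].
rewrite size_map size_enum_ord; split=> //.
by apply: eq_bigr => i _; rewrite (nth_map i) ?size_enum_ord // nth_ord_enum.
Qed.

Lemma in_ideal0 gens : in_ideal gens 0.
Proof. by apply/in_idealP; exists (fun _ => 0); rewrite big1 // => i _; rewrite mul0r. Qed.

Lemma in_idealD gens f g : in_ideal gens f -> in_ideal gens g -> in_ideal gens (f + g).
Proof.
move=> /in_idealP [c ->] /in_idealP [d ->]; apply/in_idealP.
by exists (fun i => c i + d i); rewrite -big_split; apply: eq_bigr => i _; rewrite mulrDl.
Qed.

Lemma in_idealMl gens x f : in_ideal gens f -> in_ideal gens (x * f).
Proof.
move=> /in_idealP [c ->]; apply/in_idealP; exists (fun i => x * c i).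
by rewrite mulr_sumr; apply: eq_bigr => i _; rewrite mulrA.
Qed.

Lemma in_idealMr gens x f : in_ideal gens f -> in_ideal gens (f * x).
Proof. by rewrite mulrC; apply: in_idealMl. Qed.

Lemma in_idealZ gens c f : in_ideal gens f -> in_ideal gens (c *: f).
Proof. by rewrite -mul_mpolyC; apply: in_idealMl. Qed.

Lemma in_ideal_sum gens (I : Type) (s : seq I) (P : pred I) (F : I -> S) :
  (forall i, P i -> in_ideal gens (F i)) -> in_ideal gens (\sum_(i <- s | P i) F i).
Proof.
move=> hF; apply: (big_ind (in_ideal gens)) => //; first exact: in_ideal0.
by move=> x y; apply: in_idealD.
Qed.

Lemma in_ideal_mem gens g : g \in gens -> in_ideal gens g.
Proof.
move=> gin; apply/in_idealP; have ig : (index g gens < size gens)%N by rewrite index_mem.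
exists (fun i => ((i : nat) == index g gens)%:R).
rewrite (bigD1 (Ordinal ig)) //= eqxx mul1r nth_index // big1 ?addr0 // => i /eqP ne.
by case: eqP => e; [case: ne; apply: val_inj | rewrite mul0r].
Qed.

Lemma in_ideal_sub gens1 gens2 f :
  {in gens1, forall g, in_ideal gens2 g} -> in_ideal gens1 f -> in_ideal gens2 f.
Proof.
move=> hg /in_idealP [c ->]; apply: in_ideal_sum => i _.
by apply/in_idealMl/hg; apply: mem_nth.
Qed.

Lemma pow_gensS gens k g : g \in pow_gens gens k.+1 ->
  exists g1 g2, [/\ g1 \in gens, g2 \in pow_gens gens k & g = g1 * g2].
Proof. by move=> /allpairsP [[g1 g2] /= [g1in g2in ->]]; exists g1, g2. Qed.

Lemma pow_gensM gens k l g h :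
  g \in pow_gens gens k -> h \in pow_gens gens l -> g * h \in pow_gens gens (k + l).
Proof.
elim: k g => [|k IH] g; first by rewrite inE => /eqP -> hin; rewrite mul1r.
move=> /pow_gensS [g1 [g2 [g1in g2in ->]]] hin; rewrite -mulrA.
by apply/allpairsP; exists (g1, g2 * h); split=> //; apply: IH.
Qed.

Lemma in_ideal_pow1 gens g : g \in gens -> in_ideal (pow_gens gens 1) g.
Proof.
move=> gin; rewrite -[g]mulr1; apply/in_ideal_mem/allpairsP.
by exists (g, 1); rewrite /= inE.
Qed.

Lemma in_ideal_powM gens k l x y :
  in_ideal (pow_gens gens k) x -> in_ideal (pow_gens gens l) y ->
  in_ideal (pow_gens gens (k + l)) (x * y).
Proof.
move=> /in_idealP [c ->] /in_idealP [d ->]; rewrite mulr_suml.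
apply: in_ideal_sum => p _; rewrite mulr_sumr; apply: in_ideal_sum => q _.
by rewrite mulrACA; apply/in_idealMl/in_ideal_mem/pow_gensM; apply: mem_nth.
Qed.

Lemma in_ideal_powXn gens k x n :
  in_ideal (pow_gens gens k) x -> in_ideal (pow_gens gens (n * k)) (x ^+ n).
Proof.
move=> hx; elim: n => [|n IH]; first by rewrite expr0; apply: in_ideal_mem; rewrite inE.
by rewrite exprS mulSn; apply: in_ideal_powM.
Qed.

Lemma in_ideal_pow_le gens k l f :
  (l <= k)%N -> in_ideal (pow_gens gens k) f -> in_ideal (pow_gens gens l) f.
Proof.
move=> /subnK <-; elim: (k - l)%N f => [|d IH] f //; rewrite addSn => hf.
apply/IH/(in_ideal_sub _ hf) => _ /pow_gensS [g1 [g2 [_ g2in ->]]].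
exact/in_idealMl/in_ideal_mem.
Qed.

End Ideals.

(* In the affine chart X0 = Y0 = 1 the base point [1:0]x[1:0] is the origin,
   with local coordinates X1, Y1. *)
Definition ord_ge (K : fieldType) (f : {mpoly K[4]}) (k : nat) :=
  forall e, e \in msupp f -> (k <= e iX1 + e iY1)%N.

Section BaseOrder.
Variable K : fieldType.
Local Notation S := {mpoly K[4]}.
Implicit Types (f g : S).

Lemma ord_ge0 k : ord_ge (0 : S) k.
Proof. by move=> e; rewrite -mpolyC0 msupp0. Qed.

Lemma ord_geD f g k : ord_ge f k -> ord_ge g k -> ord_ge (f + g) k.
Proof. by move=> hf hg e /msuppD_le; rewrite mem_cat => /orP [/hf|/hg]. Qed.

Lemma ord_geM f g p q : ord_ge f p -> ord_ge g q -> ord_ge (f * g) (p + q).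
Proof.
move=> hf hg e /msuppM_le /allpairsP [[e1 e2] /= [/hf h1 /hg h2 ->]].
by rewrite !mnmDE; lia.
Qed.

Lemma ord_geMl f g q : ord_ge g q -> ord_ge (f * g) q.
Proof. exact: (@ord_geM f g 0). Qed.

Lemma ord_ge_sum (I : Type) (s : seq I) (P : pred I) (F : I -> S) k :
  (forall i, P i -> ord_ge (F i) k) -> ord_ge (\sum_(i <- s | P i) F i) k.
Proof.
move=> hF; apply: (big_ind (fun x : S => ord_ge x k)) => //; first exact: ord_ge0.
by move=> x y; apply: ord_geD.
Qed.

Lemma ord_geZX i c : (i == iX1) || (i == iY1) -> ord_ge (c *: 'X_i : S) 1.
Proof. by move=> hi e /msuppZ_le /mem_msuppXP <-; rewrite !mnm1E; case/orP: hi => /eqP ->. Qed.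

End BaseOrder.

Section Chart.
Variable K : fieldType.
Local Notation S := {mpoly K[4]}.
Local Notation pt := ((K * K) * (K * K))%type.
Implicit Types (P : pt) (f g : S).

Lemma comp_mpolyA f (lq lr : 4.-tuple S) :
  (f \mPo lq) \mPo lr = f \mPo [tuple tnth lq i \mPo lr | i < 4].
Proof.
rewrite (comp_mpolyEX f lq) [RHS]comp_mpolyEX.
rewrite (big_morph _ (comp_mpolyD lr) (comp_mpoly0 lr)); apply: eq_bigr => e _.
rewrite !comp_mpolyZ !comp_mpolyX rmorph_prod; congr (_ *: _); apply: eq_bigr => i _.
by rewrite rmorphXn tnth_mktuple.
Qed.

Lemma tuple4P (t1 t2 : 4.-tuple S) :
  tnth t1 iX0 = tnth t2 iX0 -> tnth t1 iX1 = tnth t2 iX1 ->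
  tnth t1 iY0 = tnth t2 iY0 -> tnth t1 iY1 = tnth t2 iY1 -> t1 = t2.
Proof. by move=> *; apply: eq_from_tnth; apply: ord4_ind. Qed.

Lemma mpolyX_mon4 A B C E :
  'X_[mon4 A B C E] = 'X_iX0 ^+ A * 'X_iX1 ^+ B * 'X_iY0 ^+ C * 'X_iY1 ^+ E :> S.
Proof. by rewrite -[LHS]comp_mpoly_id comp_mpolyX big_ord4 !tnth_mktuple !mon4E. Qed.

Definition lform (u v : K) (i0 i1 : 'I_4) : S := u *: 'X_i0 + v *: 'X_i1.

Lemma lform_comp u v i0 i1 (lq : 4.-tuple S) :
  lform u v i0 i1 \mPo lq = u *: tnth lq i0 + v *: tnth lq i1.
Proof. by rewrite comp_mpolyD !comp_mpolyZ !comp_mpolyXU -!tnth_nth. Qed.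

Lemma lform_comb c1 c2 u1 v1 u2 v2 i0 i1 :
  c1 *: lform u1 v1 i0 i1 + c2 *: lform u2 v2 i0 i1 =
  lform (c1 * u1 + c2 * u2) (c1 * v1 + c2 * v2) i0 i1.
Proof. by rewrite /lform !scalerDr !scalerA !scalerDl addrACA. Qed.

Lemma lform_eqX0 u v i0 i1 : u = 1 -> v = 0 -> lform u v i0 i1 = 'X_i0.
Proof. by move=> -> ->; rewrite /lform scale1r scale0r addr0. Qed.

Lemma lform_eqX1 u v i0 i1 : u = 0 -> v = 1 -> lform u v i0 i1 = 'X_i1.
Proof. by move=> -> ->; rewrite /lform scale1r scale0r add0r. Qed.

Lemma bihom_lformX u v : bihom (lform u v iX0 iX1) 1 0.
Proof. by apply: bihomD; apply: bihomZ; exact: bihomX. Qed.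

Lemma bihom_lformY u v : bihom (lform u v iY0 iY1) 0 1.
Proof. by apply: bihomD; apply: bihomZ; exact: bihomX. Qed.

Lemma comp_bihom (lq : 4.-tuple S) f a b :
  bihom (tnth lq iX0) 1 0 -> bihom (tnth lq iX1) 1 0 ->
  bihom (tnth lq iY0) 0 1 -> bihom (tnth lq iY1) 0 1 ->
  bihom f a b -> bihom (f \mPo lq) a b.
Proof.
move=> h0 h1 h2 h3 hf; rewrite comp_mpolyEX big_seq.
apply: bihom_sum => e /hf [ha hb]; apply: bihomZ; rewrite comp_mpolyX big_ord4.
apply: bihom_eqdeg (bihomM (bihomM (bihomM (bihomXn (n := e iX0) h0) (bihomXn (n := e iX1) h1))
  (bihomXn (n := e iY0) h2)) (bihomXn (n := e iY1) h3)) _ _; lia.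
Qed.

Definition compl_pt (c : K * K) : K * K := if c.1 == 0 then (1, 0) else (0, 1).
Definition pt_det (c : K * K) : K := c.1 * (compl_pt c).2 - (compl_pt c).1 * c.2.

Lemma pt_det_neq0 c : c.1 != 0 \/ c.2 != 0 -> pt_det c != 0.
Proof.
rewrite /pt_det /compl_pt; case: eqP => [-> [//|h]|/eqP h _] /=.
  by rewrite mul0r sub0r mul1r oppr_eq0.
by rewrite mulr1 mul0r subr0.
Qed.

Definition proper_pt P := (P.1.1 != 0 \/ P.1.2 != 0) /\ (P.2.1 != 0 \/ P.2.2 != 0).

(* [f \mPo chart P] is f in coordinates in which P becomes the base point
   [1:0]x[1:0]; [chart_inv P] is the inverse substitution. *)
Definition chart P : 4.-tuple S :=
  [tuple lform P.1.1 (compl_pt P.1).1 iX0 iX1; lform P.1.2 (compl_pt P.1).2 iX0 iX1;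
         lform P.2.1 (compl_pt P.2).1 iY0 iY1; lform P.2.2 (compl_pt P.2).2 iY0 iY1].

Definition chart_inv P : 4.-tuple S :=
  [tuple lform ((compl_pt P.1).2 / pt_det P.1) (- (compl_pt P.1).1 / pt_det P.1) iX0 iX1;
         lform (- P.1.2 / pt_det P.1) (P.1.1 / pt_det P.1) iX0 iX1;
         lform ((compl_pt P.2).2 / pt_det P.2) (- (compl_pt P.2).1 / pt_det P.2) iY0 iY1;
         lform (- P.2.2 / pt_det P.2) (P.2.1 / pt_det P.2) iY0 iY1].

Lemma chart_inv_tupleK P : proper_pt P ->
  [tuple tnth (chart P) i \mPo chart_inv P | i < 4] = [tuple 'X_i | i < 4] /\
  [tuple tnth (chart_inv P) i \mPo chart P | i < 4] = [tuple 'X_i | i < 4].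
Proof.
case: P => [[a0 a1] [b0 b1]] [/pt_det_neq0 + /pt_det_neq0].
rewrite /chart_inv /chart /pt_det /=.
case: (compl_pt _) => c0 c1; case: (compl_pt _) => d0 d1 /= ha hb.
by split; apply: tuple4P; rewrite !tnth_mktuple /= lform_comp /= lform_comb;
  (apply: lform_eqX0 || apply: lform_eqX1); field.
Qed.

Lemma comp_chartK P f : proper_pt P -> (f \mPo chart P) \mPo chart_inv P = f.
Proof. by case/chart_inv_tupleK => hK _; rewrite comp_mpolyA hK comp_mpoly_id. Qed.

Lemma comp_chart_invK P f : proper_pt P -> (f \mPo chart_inv P) \mPo chart P = f.
Proof. by case/chart_inv_tupleK => _ hK; rewrite comp_mpolyA hK comp_mpoly_id. Qed.

Lemma chart_bihom P f a b : bihom f a b -> bihom (f \mPo chart P) a b.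
Proof. by apply: comp_bihom; rewrite /=; (apply: bihom_lformX || apply: bihom_lformY). Qed.

Lemma chart_inv_bihom P f a b : bihom f a b -> bihom (f \mPo chart_inv P) a b.
Proof. by apply: comp_bihom; rewrite /=; (apply: bihom_lformX || apply: bihom_lformY). Qed.

Lemma pt_gens0E P : (pt_gens P)`_0 = lform P.1.2 (- P.1.1) iX0 iX1.
Proof. by rewrite /lform scaleNr. Qed.

Lemma pt_gens1E P : (pt_gens P)`_1 = lform P.2.2 (- P.2.1) iY0 iY1.
Proof. by rewrite /lform scaleNr. Qed.

Lemma chart_pt_gens0 P : (pt_gens P)`_0 \mPo chart P = - pt_det P.1 *: 'X_iX1.
Proof.
rewrite pt_gens0E lform_comp /= lform_comb -[RHS]add0r -(scale0r 'X_iX0).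
by congr (_ *: _ + _ *: _); rewrite /pt_det; ring.
Qed.

Lemma chart_pt_gens1 P : (pt_gens P)`_1 \mPo chart P = - pt_det P.2 *: 'X_iY1.
Proof.
rewrite pt_gens1E lform_comp /= lform_comb -[RHS]add0r -(scale0r 'X_iY0).
by congr (_ *: _ + _ *: _); rewrite /pt_det; ring.
Qed.

Lemma chart_invX1 P : proper_pt P ->
  'X_iX1 \mPo chart_inv P = - (pt_det P.1)^-1 *: (pt_gens P)`_0.
Proof.
case=> /pt_det_neq0 h _; rewrite comp_mpolyXU pt_gens0E /= /lform scalerDr !scalerA.
by congr (_ *: _ + _ *: _); field.
Qed.

Lemma chart_invY1 P : proper_pt P ->
  'X_iY1 \mPo chart_inv P = - (pt_det P.2)^-1 *: (pt_gens P)`_1.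
Proof.
case=> _ /pt_det_neq0 h; rewrite comp_mpolyXU pt_gens1E /= /lform scalerDr !scalerA.
by congr (_ *: _ + _ *: _); field.
Qed.

Lemma ord_ge_chart_pow_gens P k g :
  g \in pow_gens (pt_gens P) k -> ord_ge (g \mPo chart P) k.
Proof.
elim: k g => [|k IH] g; first by move=> _ e _.
move=> /pow_gensS [g1 [g2 [g1in /IH g2ord ->]]]; rewrite rmorphM.
apply: (ord_geM (p := 1)) g2ord; move: g1in; rewrite !inE => /orP [] /eqP ->.
- by have := chart_pt_gens0 P => /= ->; apply: ord_geZX.
- by have := chart_pt_gens1 P => /= ->; apply: ord_geZX.
Qed.

Lemma ord_ge_chart P k f : in_pt_pow P k f -> ord_ge (f \mPo chart P) k.
Proof.
move=> /in_idealP [c ->]; rewrite (big_morph _ (comp_mpolyD _) (comp_mpoly0 _)).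
apply: ord_ge_sum => i _; rewrite rmorphM; apply/ord_geMl/ord_ge_chart_pow_gens.
exact: mem_nth.
Qed.

Lemma in_pt_pow_ord_ge P k f : proper_pt P -> ord_ge (f \mPo chart P) k -> in_pt_pow P k f.
Proof.
move=> hP hord; rewrite -(comp_chartK f hP) comp_mpolyEX big_seq.
apply: in_ideal_sum => e /hord he; apply: in_idealZ.
have gen_pow1 n : (n < 2)%N -> in_pt_pow P 1 (pt_gens P)`_n.
  by move=> hn; apply/in_ideal_pow1/mem_nth.
have hX : in_pt_pow P 1 (tnth (chart_inv P) iX1).
  by rewrite (tnth_nth 0) -comp_mpolyXU chart_invX1 //; apply/in_idealZ/gen_pow1.
have hY : in_pt_pow P 1 (tnth (chart_inv P) iY1).
  by rewrite (tnth_nth 0) -comp_mpolyXU chart_invY1 //; apply/in_idealZ/gen_pow1.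
rewrite comp_mpolyX big_ord4 -[_ * _ * _ * _]mulrA mulrACA; apply/in_idealMl/(in_ideal_pow_le he).
by have := in_ideal_powM (in_ideal_powXn (e iX1) hX) (in_ideal_powXn (e iY1) hY); rewrite !muln1.
Qed.

End Chart.

Section ChartCoefficients.
Variable K : fieldType.
Local Notation S := {mpoly K[4]}.
Local Notation pt := ((K * K) * (K * K))%type.
Implicit Types (P : pt) (f g : S).

Definition chart_coef P a b s u f : K := (f \mPo chart P)@_(mon4 (a - s) s (b - u) u).

Lemma chart_coefD P a b s u f g :
  chart_coef P a b s u (f + g) = chart_coef P a b s u f + chart_coef P a b s u g.
Proof. by rewrite /chart_coef comp_mpolyD mcoeffD. Qed.

Lemma chart_coefZ P a b s u c f : chart_coef P a b s u (c *: f) = c * chart_coef P a b s u f.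
Proof. by rewrite /chart_coef comp_mpolyZ mcoeffZ. Qed.

Lemma chart_coef_pt_pow P k a b s u f :
  (s + u < k)%N -> in_pt_pow P k f -> chart_coef P a b s u f = 0.
Proof.
move=> hsu /ord_ge_chart ho; apply/eqP; rewrite mcoeff_eq0; apply/negP => /ho.
by rewrite !mon4E leqNgt hsu.
Qed.

Lemma pt_pow_chart_coef P k a b f : proper_pt P -> bihom f a b ->
  (forall s u, (s + u < k)%N -> chart_coef P a b s u f = 0) -> in_pt_pow P k f.
Proof.
move=> hP hf hT; apply: in_pt_pow_ord_ge => // e ein.
have [ha hb] := chart_bihom (P := P) hf ein.
rewrite leqNgt; apply/negP => hlt; move: ein; rewrite mcoeff_msupp.
have -> : e = mon4 (a - e iX1) (e iX1) (b - e iY1) (e iY1) by apply: mnm4P; rewrite !mon4E; lia.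
by rewrite -/(chart_coef P a b _ _ f) hT ?eqxx.
Qed.

Definition base_pt (i : 'I_4) : K := if (i == iX0) || (i == iY0) then 1 else 0.

Lemma meval_base_bihom g A B : bihom g A B -> meval base_pt g = g@_(mon4 A 0 B 0).
Proof.
move=> hg; rewrite mevalE [in RHS](mpolyE g) raddf_sum /= !big_seq.
apply: eq_bigr => e /hg [hA hB].
rewrite mcoeffZ mcoeffX big_ord4 /base_pt /= !expr1n !mul1r mulr1 !expr0n -natrM mulnb.
congr (_ * (nat_of_bool _)%:R); apply/idP/idP => [/andP [/eqP e1 /eqP e3]|/eqP ->].
  by apply/eqP/mnm4P; rewrite !mon4E; lia.
by rewrite !mon4E.
Qed.

Lemma meval_base_lformX u v : meval base_pt (lform u v iX0 iX1) = u.
Proof. by rewrite /lform mevalD !mevalZ !mevalXU /base_pt /= mulr1 mulr0 addr0. Qed.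

Lemma meval_base_lformY u v : meval base_pt (lform u v iY0 iY1) = u.
Proof. by rewrite /lform mevalD !mevalZ !mevalXU /base_pt /= mulr1 mulr0 addr0. Qed.

Lemma mcoeff_XM_nle (e e' : 'X_{1..4}) g : ~~ (e <= e')%MM -> ('X_[e] * g)@_e' = 0.
Proof.
move=> hn; apply/eqP; rewrite mcoeff_eq0 mulrC (perm_mem (msuppMX _ _)).
apply/negP => /mapP [e'' _ he]; move: hn; rewrite he.
by apply/negP/negPn/mnm_lepP => i; rewrite mnmDE leq_addr.
Qed.

End ChartCoefficients.

Arguments base_pt {K} i.

Section LinearConditions.
Variable K : fieldType.
Local Notation S := {mpoly K[4]}.
Variables (I : finType) (a b : nat).

Definition dual_basis (T : I -> S -> K) (A : {pred I}) (F : I -> S) :=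
  forall x, x \in A -> bihom (F x) a b /\ forall y, y \in A -> T y (F x) = (y == x)%:R.

Variable T : I -> S -> K.
Hypothesis TD : forall x f g, T x (f + g) = T x f + T x g.
Hypothesis TZ : forall x c f, T x (c *: f) = c * T x f.

Lemma functionalB x f g : T x (f - g) = T x f - T x g.
Proof. by rewrite TD -scaleN1r TZ mulN1r. Qed.

Lemma functional_sum x (J : Type) (s : seq J) (P : pred J) (F : J -> S) :
  T x (\sum_(j <- s | P j) F j) = \sum_(j <- s | P j) T x (F j).
Proof. by apply: big_morph; [exact: TD | rewrite -(scale0r 0) TZ mul0r]. Qed.

Lemma quot_dim_dual_basis (A : {pred I}) (F : I -> S) (J : S -> Prop) :
  dual_basis T A F ->
  (forall f, J f -> forall x, x \in A -> T x f = 0) ->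
  (forall f, bihom f a b -> (forall x, x \in A -> T x f = 0) -> J f) ->
  quot_dim J a b #|A|.
Proof.
move=> hF hJ1 hJ2; pose Fv (i : 'I_#|A|) := F (enum_val i).
have TFv x (c : 'I_#|A| -> K) : x \in A ->
    T x (\sum_i c i *: Fv i) = \sum_i c i * (x == enum_val i)%:R.
  by move=> xA; rewrite functional_sum; apply: eq_bigr => i _; rewrite TZ (hF _ (enum_valP i)).2.
exists Fv; split; [|split].
- by move=> i; apply: (hF _ (enum_valP i)).1.
- move=> c /hJ1 hc i; have := hc _ (enum_valP i); rewrite TFv ?enum_valP //.
  rewrite (bigD1 i) //= eqxx mulr1 big1 ?addr0 // => i' ne.
  by rewrite (inj_eq enum_val_inj) eq_sym (negbTE ne) mulr0.
- move=> f hf; exists (fun i => T (enum_val i) f); apply: hJ2.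
    apply/bihomB/bihom_sum => // i _; apply/bihomZ.
    exact: (hF _ (enum_valP i)).1.
  move=> x xA; rewrite functionalB TFv // (bigD1 (enum_rank_in xA x)) //= enum_rankK_in //.
  rewrite eqxx mulr1 big1 ?addr0 ?subrr // => i ne.
  by rewrite -(enum_rankK_in xA xA) (inj_eq enum_val_inj) eq_sym (negbTE ne) mulr0.
Qed.

Lemma triangular_dual_basis (A : {pred I}) (E : I -> S) (gap : I -> nat) :
  (forall x, x \in A -> bihom (E x) a b) ->
  (forall x, x \in A -> T x (E x) != 0) ->
  (forall x z, x \in A -> z \in A -> z != x -> T z (E x) != 0 -> (gap z < gap x)%N) ->
  exists F, dual_basis T A F.
Proof.
move=> hE hEx htri.
pose c x z := (T x (E x))^-1 * T z (E x).
pose step (F : I -> S) x := (T x (E x))^-1 *: E x - \sum_(z in A | z != x) c x z *: F z.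
suff [F [hFb hF]] : exists F, (forall x, x \in A -> bihom (F x) a b) /\
    forall x, x \in A -> (gap x < (\max_(z in A) gap z).+1)%N ->
      forall y, y \in A -> T y (F x) = (y == x)%:R.
  exists F => x xA; split; first exact: hFb.
  by apply: hF; rewrite // ltnS; apply: leq_bigmax_cond.
elim: (\max_(z in A) gap z).+1 => [|n [F [hFb hF]]].
  by exists (fun=> 0); split=> // x _; exact: bihom0.
exists (step F); split=> [x xA | x xA hx y yA].
  apply/bihomB; first exact/bihomZ/hE.
  by apply: bihom_sum => z /andP [zA _]; apply/bihomZ/hFb.
rewrite functionalB TZ functional_sum.
rewrite (eq_bigr (fun z => c x z * (y == z)%:R)); last first.
  move=> z /andP [zA zx]; rewrite TZ /c.
  have [->|nz] := eqVneq (T z (E x)) 0; first by rewrite !(mulr0, mul0r).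
  by rewrite hF //; apply: leq_trans (htri x z xA zA zx nz) _; rewrite -ltnS.
case: (eqVneq y x) => [->|yx].
  rewrite big1 ?subr0 ?mulVf ?hEx // => z /andP [_ zx].
  by rewrite eq_sym (negbTE zx) mulr0.
rewrite (bigD1 y) /=; last by rewrite yA yx.
rewrite eqxx mulr1 big1 ?addr0 ?subrr // => z /andP [_ zy].
by rewrite eq_sym (negbTE zy) mulr0.
Qed.

End LinearConditions.

Lemma quot_dim_dual_basis_line (K : fieldType) (I : finType) (a b : nat)
    (T : I -> {mpoly K[4]} -> K) (A : {pred I}) (F : I -> {mpoly K[4]})
    (I0 J : {mpoly K[4]} -> Prop) (g0 : {mpoly K[4]}) (x0 : I) :
  (forall x f g, T x (f + g) = T x f + T x g) ->
  (forall x c f, T x (c *: f) = c * T x f) ->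
  dual_basis a b T A F -> bihom g0 a b -> x0 \in A -> T x0 g0 != 0 ->
  (forall f, I0 f -> forall x, x \in A -> T x f = 0) ->
  (forall f, bihom f a b -> (forall x, x \in A -> T x f = 0) -> I0 f) ->
  (forall f, J f -> exists c, forall x, x \in A -> T x f = c * T x g0) ->
  (forall f c, I0 f -> J (f + c *: g0)) ->
  quot_dim J a b (#|A| - 1).
Proof.
move=> TD TZ hF hg0 x0A w0 hI1 hI2 hJ1 hJ2.
pose w x := T x g0 / T x0 g0.
rewrite (cardD1 x0 A) x0A add1n subn1 /=.
apply: (@quot_dim_dual_basis _ _ _ _ (fun x f => T x f - w x * T x0 f) _ _ _ F).
- by move=> x f g; rewrite !TD; ring.
- by move=> x c f; rewrite !TZ; ring.
- move=> x; rewrite inE => /andP [xx0 xA]; have [hb hT] := hF x xA.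
  split=> // y; rewrite inE => /andP [yx0 yA].
  by rewrite !hT // (eq_sym x0) (negbTE xx0) mulr0 subr0.
- move=> f /hJ1 [c hc] x; rewrite inE => /andP [_ xA].
  by rewrite !hc // /w; field.
- move=> f hf hT; pose c := T x0 f / T x0 g0.
  rewrite -(subrK (c *: g0) f); apply/hJ2/hI2 => [|x xA]; first exact/bihomB/bihomZ.
  rewrite (functionalB TD TZ) TZ.
  case: (eqVneq x x0) => [->|xx0]; first by rewrite /c divfK // subrr.
  have := hT x; rewrite inE xx0 xA => /(_ isT) /eqP; rewrite subr_eq0 => /eqP ->.
  by rewrite /w /c; field.
Qed.

Section FatPoints.
Variable K : fieldType.
Local Notation S := {mpoly K[4]}.
Variables (r t : nat) (Q : 'I_r -> K * K) (R : 'I_t -> K * K).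
Hypothesis HQ0 : forall i, (Q i).1 != 0 \/ (Q i).2 != 0.
Hypothesis HR0 : forall j, (R j).1 != 0 \/ (R j).2 != 0.
Hypothesis HQd : forall i i', i != i' -> (Q i).1 * (Q i').2 != (Q i).2 * (Q i').1.
Hypothesis HRd : forall j j', j != j' -> (R j).1 * (R j').2 != (R j).2 * (R j').1.
Variables (D : {set 'I_r * 'I_t}) (m : 'I_r -> 'I_t -> nat).

Local Notation Pt k l := (Q k, R l).

Lemma proper_grid k l : proper_pt (Pt k l).
Proof. by split; [apply: HQ0 | apply: HR0]. Qed.

Definition mmax := (\max_(k < r) \max_(l < t) m k l)%N.

Lemma m_le_mmax k l : (m k l <= mmax)%N.
Proof. exact: leq_trans (leq_bigmax (F := fun l => m k l) l) (leq_bigmax k). Qed.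

Definition lineX k : S := (Q k).2 *: 'X_iX0 - (Q k).1 *: 'X_iX1.
Definition lineY l : S := (R l).2 *: 'X_iY0 - (R l).1 *: 'X_iY1.

Lemma lineXE k : lineX k = lform (Q k).2 (- (Q k).1) iX0 iX1.
Proof. by rewrite /lform scaleNr. Qed.

Lemma lineYE l : lineY l = lform (R l).2 (- (R l).1) iY0 iY1.
Proof. by rewrite /lform scaleNr. Qed.

Lemma bihom_lineX k : bihom (lineX k) 1 0.
Proof. by rewrite lineXE; apply: bihom_lformX. Qed.

Lemma bihom_lineY l : bihom (lineY l) 0 1.
Proof. by rewrite lineYE; apply: bihom_lformY. Qed.

Lemma lineX_chart k l : lineX k \mPo chart (Pt k l) = - pt_det (Q k) *: 'X_iX1.
Proof. exact: (chart_pt_gens0 (Pt k l)). Qed.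

Lemma lineY_chart k l : lineY l \mPo chart (Pt k l) = - pt_det (R l) *: 'X_iY1.
Proof. exact: (chart_pt_gens1 (Pt k l)). Qed.

Lemma meval_base_lineX k k' l : k' != k -> meval base_pt (lineX k' \mPo chart (Pt k l)) != 0.
Proof.
rewrite eq_sym => /HQd; apply: contraNneq => h.
rewrite lineXE lform_comp /= lform_comb meval_base_lformX in h.
by rewrite -subr_eq0 -h; apply/eqP; ring.
Qed.

Lemma meval_base_lineY k l l' : l' != l -> meval base_pt (lineY l' \mPo chart (Pt k l)) != 0.
Proof.
rewrite eq_sym => /HRd; apply: contraNneq => h.
rewrite lineYE lform_comp /= lform_comb meval_base_lformY in h.
by rewrite -subr_eq0 -h; apply/eqP; ring.
Qed.

Definition degX k := (\sum_(k' < r | k' != k) mmax)%N.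
Definition degY l := (\sum_(l' < t | l' != l) mmax)%N.
Definition sepX k : S := \prod_(k' < r | k' != k) lineX k' ^+ mmax.
Definition sepY l : S := \prod_(l' < t | l' != l) lineY l' ^+ mmax.
Definition axisX k l : S := tnth (chart_inv (Pt k l)) iX0.
Definition axisY k l : S := tnth (chart_inv (Pt k l)) iY0.

Lemma sepX_bihom k : bihom (sepX k) (degX k) 0.
Proof.
apply: bihom_eqdeg (bihom_prod (da := fun=> (mmax * 1)%N) (db := fun=> (mmax * 0)%N) _) _ _.
- by move=> k' _; apply/bihomXn/bihom_lineX.
- by apply: eq_bigr => k' _; rewrite muln1.
- by rewrite big1 // => k' _; rewrite muln0.
Qed.

Lemma sepY_bihom l : bihom (sepY l) 0 (degY l).
Proof.
apply: bihom_eqdeg (bihom_prod (da := fun=> (mmax * 0)%N) (db := fun=> (mmax * 1)%N) _) _ _.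
- by move=> l' _; apply/bihomXn/bihom_lineY.
- by rewrite big1 // => l' _; rewrite muln0.
- by apply: eq_bigr => l' _; rewrite muln1.
Qed.

Lemma bihom_axisX k l : bihom (axisX k l) 1 0.
Proof. exact: bihom_lformX. Qed.

Lemma bihom_axisY k l : bihom (axisY k l) 0 1.
Proof. exact: bihom_lformY. Qed.

Lemma axisX_chart k l : axisX k l \mPo chart (Pt k l) = 'X_iX0.
Proof. by rewrite /axisX (tnth_nth 0) -comp_mpolyXU comp_chart_invK //; apply: proper_grid. Qed.

Lemma axisY_chart k l : axisY k l \mPo chart (Pt k l) = 'X_iY0.
Proof. by rewrite /axisY (tnth_nth 0) -comp_mpolyXU comp_chart_invK //; apply: proper_grid. Qed.

(* In the chart at P_kl, [tri_elem a b k l s u] is a nonzero multiple of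
   X1^s Y1^u times a form not vanishing at the base point, while it lies in
   every other fat point of the grid. *)
Definition tri_elem a b k l s u : S :=
  lineX k ^+ s * lineY l ^+ u * sepX k * sepY l *
  axisX k l ^+ (a - s - degX k) * axisY k l ^+ (b - u - degY l).

Definition tri_cofactor a b k l s u : S :=
  (sepX k \mPo chart (Pt k l)) * (sepY l \mPo chart (Pt k l)) *
  'X_iX0 ^+ (a - s - degX k) * 'X_iY0 ^+ (b - u - degY l).

Lemma tri_elem_bihom a b k l s u : (s + degX k <= a)%N -> (u + degY l <= b)%N ->
  bihom (tri_elem a b k l s u) a b.
Proof.
move=> ha hb; have hX := bihomXn (n := s) (bihom_lineX (k := k)).
have hY := bihomXn (n := u) (bihom_lineY (l := l)).
have hx := bihomXn (n := a - s - degX k) (bihom_axisX (k := k) (l := l)).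
have hy := bihomXn (n := b - u - degY l) (bihom_axisY (k := k) (l := l)).
apply: bihom_eqdeg (bihomM (bihomM (bihomM (bihomM (bihomM hX hY) (sepX_bihom (k := k)))
  (sepY_bihom (l := l))) hx) hy) _ _; lia.
Qed.

Lemma tri_cofactor_bihom a b k l s u : (s + degX k <= a)%N -> (u + degY l <= b)%N ->
  bihom (tri_cofactor a b k l s u) (a - s) (b - u).
Proof.
move=> ha hb; have hx := bihomXn (n := a - s - degX k) (bihomX (K := K) (i := iX0)).
have hy := bihomXn (n := b - u - degY l) (bihomX (K := K) (i := iY0)).
apply: bihom_eqdeg (bihomM (bihomM (bihomM (chart_bihom (P := Pt k l) (sepX_bihom (k := k)))
  (chart_bihom (P := Pt k l) (sepY_bihom (l := l)))) hx) hy) _ _ => /=; lia.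
Qed.

Lemma meval_base_tri_cofactor a b k l s u : meval base_pt (tri_cofactor a b k l s u) != 0.
Proof.
rewrite /tri_cofactor !rmorphM !rmorphXn /= !mevalXU /base_pt /= !expr1n !mulr1.
rewrite /sepX /sepY !rmorph_prod; apply: mulf_neq0; apply/prodf_neq0 => k' nk;
  by rewrite !rmorphXn expf_neq0 // (meval_base_lineX, meval_base_lineY).
Qed.

Lemma tri_elem_chart a b k l s u :
  tri_elem a b k l s u \mPo chart (Pt k l) =
  ((- pt_det (Q k)) ^+ s * (- pt_det (R l)) ^+ u) *:
    ('X_[mon4 0 s 0 u] * tri_cofactor a b k l s u).
Proof.
rewrite /tri_elem /tri_cofactor !rmorphM !rmorphXn /= lineX_chart lineY_chart.
rewrite axisX_chart axisY_chart mpolyX_mon4 !exprZn -!mul_mpolyC rmorphM /=; ring.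
Qed.

Lemma chart_coef_tri_elem_nle a b k l s u s' u' : ~~ ((s <= s') && (u <= u'))%N ->
  chart_coef (Pt k l) a b s' u' (tri_elem a b k l s u) = 0.
Proof.
move=> hn; rewrite /chart_coef tri_elem_chart mcoeffZ mcoeff_XM_nle ?mulr0 //.
by apply: contra hn => /mnm_lepP h; have := h iX1; have := h iY1; rewrite !mon4E => -> ->.
Qed.

Lemma chart_coef_tri_elem a b k l s u : (s + degX k <= a)%N -> (u + degY l <= b)%N ->
  chart_coef (Pt k l) a b s u (tri_elem a b k l s u) != 0.
Proof.
move=> ha hb; rewrite /chart_coef tri_elem_chart mcoeffZ mulf_neq0 //.
  have [/pt_det_neq0 hQ /pt_det_neq0 hR] := proper_grid k l.
  by rewrite mulf_neq0 // expf_neq0 // oppr_eq0.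
have -> : mon4 (a - s) s (b - u) u = (mon4 0 s 0 u + mon4 (a - s) 0 (b - u) 0)%MM.
  by apply: mnm4P; rewrite !mnmDE !mon4E; lia.
rewrite mulrC mcoeffMX -meval_base_bihom; first exact: meval_base_tri_cofactor.
exact: tri_cofactor_bihom.
Qed.

Lemma tri_elem_other a b k l s u k' l' : (k', l') != (k, l) ->
  in_pt_pow (Pt k' l') (m k' l') (tri_elem a b k l s u).
Proof.
move=> ne; apply/in_idealMr/in_idealMr.
have hpow g : g \in pt_gens (Pt k' l') -> in_pt_pow (Pt k' l') (m k' l') (g ^+ mmax).
  move=> gin; apply: in_ideal_pow_le (m_le_mmax k' l') _.
  by have := in_ideal_powXn mmax (in_ideal_pow1 gin); rewrite muln1.
have [ek|nk] := eqVneq k' k.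
  have nl : l' != l by move: ne; rewrite ek xpair_eqE eqxx.
  apply/in_idealMl; rewrite /sepY (bigD1 l') //=; apply/in_idealMr/hpow.
  by rewrite !inE eqxx orbT.
apply/in_idealMr/in_idealMl; rewrite /sepX (bigD1 k') //=; apply/in_idealMr/hpow.
by rewrite !inE eqxx.
Qed.

Local Notation index := (('I_r * 'I_t) * ('I_mmax * 'I_mmax))%type.

(* The conditions defining the fat point m_kl P_kl: the coefficients of
   X1^s Y1^u with s + u < m_kl in the chart at P_kl. *)
Definition fat_cond : {pred index} :=
  [pred x : index | (x.1 \in D) && (x.2.1 + x.2.2 < m x.1.1 x.1.2)%N].
Definition fat_coef a b (x : index) : S -> K := chart_coef (Pt x.1.1 x.1.2) a b x.2.1 x.2.2.
Definition fat_elem a b (x : index) : S := tri_elem a b x.1.1 x.1.2 x.2.1 x.2.2.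
Definition fat_gap (x : index) := (m x.1.1 x.1.2 - (x.2.1 + x.2.2))%N.
Definition deg_bound := (r * mmax + t * mmax + mmax)%N.

Definition fat_ideal (f : S) := forall k l, (k, l) \in D -> in_pt_pow (Pt k l) (m k l) f.

Lemma fat_coefD a b x f g : fat_coef a b x (f + g) = fat_coef a b x f + fat_coef a b x g.
Proof. exact: chart_coefD. Qed.

Lemma fat_coefZ a b x c f : fat_coef a b x (c *: f) = c * fat_coef a b x f.
Proof. exact: chart_coefZ. Qed.

Lemma fat_coef_ideal a b f x : fat_ideal f -> x \in fat_cond -> fat_coef a b x f = 0.
Proof.
move=> hf; rewrite inE => /andP [xD xlt]; apply: chart_coef_pt_pow xlt _.
by case: x xD => [[k l] st] /hf.
Qed.

Lemma ideal_fat_coef a b f : bihom f a b ->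
  (forall x, x \in fat_cond -> fat_coef a b x f = 0) -> fat_ideal f.
Proof.
move=> hf hT k l kD; apply: pt_pow_chart_coef (proper_grid k l) hf _ => s u hsu.
have hs : (s < mmax)%N by have := m_le_mmax k l; lia.
have hu : (u < mmax)%N by have := m_le_mmax k l; lia.
by apply: (hT ((k, l), (Ordinal hs, Ordinal hu))); rewrite inE /= kD hsu.
Qed.

Lemma degX_le k : (degX k <= r * mmax)%N.
Proof.
rewrite mulnC -[X in (_ <= X)%N]iter_addn_0 -big_const_ord.
by rewrite [X in (_ <= X)%N](bigD1 k) //= leq_addl.
Qed.

Lemma degY_le l : (degY l <= t * mmax)%N.
Proof.
rewrite mulnC -[X in (_ <= X)%N]iter_addn_0 -big_const_ord.
by rewrite [X in (_ <= X)%N](bigD1 l) //= leq_addl.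
Qed.

Lemma fat_elem_bihom a b x : (deg_bound <= a)%N -> (deg_bound <= b)%N ->
  bihom (fat_elem a b x) a b.
Proof.
move=> ha hb; have := degX_le x.1.1; have := degY_le x.1.2.
have := ltn_ord x.2.1; have := ltn_ord x.2.2; rewrite /deg_bound in ha hb.
by move=> *; apply: tri_elem_bihom; lia.
Qed.

Lemma fat_coef_elem a b x : (deg_bound <= a)%N -> (deg_bound <= b)%N ->
  fat_coef a b x (fat_elem a b x) != 0.
Proof.
move=> ha hb; have := degX_le x.1.1; have := degY_le x.1.2.
have := ltn_ord x.2.1; have := ltn_ord x.2.2; rewrite /deg_bound in ha hb.
by move=> *; apply: chart_coef_tri_elem; lia.
Qed.

Lemma fat_coef_elem_gap a b x z : z \in fat_cond -> z != x ->
  fat_coef a b z (fat_elem a b x) != 0 -> (fat_gap z < fat_gap x)%N.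
Proof.
case: x => [[k l] [s u]]; case: z => [[k' l'] [s' u']].
rewrite inE /fat_coef /fat_elem /fat_gap /= => /andP [_ zlt].
have [[ek el]|ne _] := eqVneq (k', l') (k, l); last first.
  by rewrite (chart_coef_pt_pow _ _ zlt (tri_elem_other _ _ _ _ ne)) eqxx.
subst k' l'; move=> nzx.
case hle: ((s <= s') && (u <= u'))%N; last by rewrite chart_coef_tri_elem_nle ?hle ?eqxx.
move=> _; move/andP: hle => [hs hu].
have : ((s : nat) != s') || ((u : nat) != u').
  apply: contraR nzx; rewrite negb_or !negbK => /andP [/eqP/val_inj -> /eqP/val_inj ->].
  exact: eqxx.
by case/orP => /eqP; lia.
Qed.

Lemma fat_dual_basis a b : (deg_bound <= a)%N -> (deg_bound <= b)%N ->
  exists F, dual_basis a b (fat_coef a b) fat_cond F.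
Proof.
move=> ha hb.
apply: (triangular_dual_basis (@fat_coefD a b) (@fat_coefZ a b)
  (E := fat_elem a b) (gap := fat_gap)).
- by move=> x _; apply: fat_elem_bihom.
- by move=> x _; apply: fat_coef_elem.
- by move=> x z _; apply: fat_coef_elem_gap.
Qed.

Lemma count_lt c n : (\sum_(u < n) (u < c)%N)%N = minn c n.
Proof.
elim: n => [|n IH]; first by rewrite big_ord0 minn0.
by rewrite big_ord_recr /= IH; case: (ltnP n c) => h; lia.
Qed.

Lemma count_pairs_lt M n : (M <= n)%N ->
  (\sum_(s < n) \sum_(u < n) (s + u < M)%N)%N = 'C(M.+1, 2).
Proof.
have inner M0 s : (\sum_(u < n) (s + u < M0)%N)%N = minn (M0 - s) n.
  by rewrite -count_lt; apply: eq_bigr => u _; rewrite ltn_subRL.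
elim: M => [|M IH] hM; first by rewrite big1 // => s _; rewrite inner sub0n min0n.
rewrite (eq_bigr (fun s : 'I_n => (M - s) + (s < M.+1))%N); last first.
  by move=> s _; rewrite inner; case: (leqP s M) => h; lia.
rewrite big_split /= count_lt (binS M.+1 1) bin1 -IH ?(ltnW hM) //.
by congr (_ + _)%N; [apply: eq_bigr => s _; rewrite inner; lia | lia].
Qed.

Lemma card_fat_cond : #|fat_cond| = (\sum_(p in D) 'C(m p.1 p.2 + 1, 2))%N.
Proof.
rewrite -sum1_card big_mkcond /=.
rewrite -(pair_bigA _ (fun p st => if (p, st) \in fat_cond then 1 else 0)%N).
rewrite [RHS]big_mkcond /=; apply: eq_bigr => p _.
case pD: (p \in D); last by rewrite big1 // => st _; rewrite inE /= pD.
rewrite addn1 -(count_pairs_lt (m_le_mmax p.1 p.2)) pair_bigA /=.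
by apply: eq_bigr => -[s u] _; rewrite inE /= pD.
Qed.

Lemma quot_dim_fat_ideal a b : (deg_bound <= a)%N -> (deg_bound <= b)%N ->
  quot_dim fat_ideal a b (\sum_(p in D) 'C(m p.1 p.2 + 1, 2))%N.
Proof.
move=> ha hb; have [F hF] := fat_dual_basis ha hb; rewrite -card_fat_cond.
apply: (quot_dim_dual_basis (@fat_coefD a b) (@fat_coefZ a b) hF).
  by move=> f hf x; exact: fat_coef_ideal.
exact: ideal_fat_coef.
Qed.

Section Separator.
Variables (i : 'I_r) (j : 'I_t) (G : S) (a0 b0 : nat).
Hypothesis Hij : (i, j) \in D.
Hypothesis HGhom : bihom G a0 b0.
Hypothesis HG1 : in_pt_pow (Pt i j) (m i j - 1) G.
Hypothesis HG2 : ~ in_pt_pow (Pt i j) (m i j) G.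
Hypothesis HG3 : forall k l, (k, l) \in D -> (k, l) != (i, j) -> in_pt_pow (Pt k l) (m k l) G.
Hypothesis Hm : (0 < m i j)%N.

Local Notation chart0 := (chart (Pt i j)).

Definition sep_ideal (f : S) := exists g h, fat_ideal g /\ f = g + h * G.

Lemma separator_exact_order :
  exists2 e, e \in msupp (G \mPo chart0) & (e iX1 + e iY1 = m i j - 1)%N.
Proof.
have hG := ord_ge_chart HG1.
have hnot : ~ ord_ge (G \mPo chart0) (m i j).
  by move=> h; apply/HG2/(in_pt_pow_ord_ge (proper_grid i j) h).
have [/allP h|] :=
  boolP (all (fun e : 'X_{1..4} => m i j <= e iX1 + e iY1)%N (msupp (G \mPo chart0))).
  by case: hnot => e /h.
rewrite -has_predC => /hasP [e ein /= hlt]; exists e => //.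
by have := hG e ein; lia.
Qed.

Definition base_mono a b := mon4 (a - a0) 0 (b - b0) 0.
Definition base_lift a b : S := 'X_[base_mono a b] \mPo chart_inv (Pt i j).

Lemma chart_base_lift a b : base_lift a b \mPo chart0 = 'X_[base_mono a b].
Proof. by rewrite comp_chart_invK //; apply: proper_grid. Qed.

Lemma base_lift_bihom a b : bihom (base_lift a b) (a - a0) (b - b0).
Proof.
apply/chart_inv_bihom/bihom_eqdeg; first exact: (bihomXm (e := base_mono a b)).
all: by rewrite /base_mono !mon4E addn0.
Qed.

(* Since G vanishes to order exactly m_ij - 1 at the base point of the chart,
   only the constant term of h in the local coordinates X1, Y1 matters. *)
Lemma fat_coef_mulG_eq0 a b y h : y \in fat_cond ->
  (h \mPo chart0)@_(base_mono a b) = 0 -> fat_coef a b y (h * G) = 0.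
Proof.
case: y => [[k l] [s u]]; rewrite inE /fat_coef /= => /andP [kD hlt] hc.
have [[ek el]|ne] := eqVneq (k, l) (i, j); last exact/(chart_coef_pt_pow _ _ hlt)/in_idealMl/HG3.
subst k l; have [hsu|hsu] := ltnP (s + u) (m i j - 1).
  exact/(chart_coef_pt_pow _ _ hsu)/in_idealMl.
rewrite /chart_coef rmorphM /=; apply/eqP; rewrite mcoeff_eq0; apply/negP.
move=> /msuppM_le /allpairsP [[e e'] /= [ein e'in he]].
have [hX hY] := chart_bihom (P := Pt i j) HGhom e'in.
have ho := ord_ge_chart HG1 e'in.
have cmp n : mon4 (a - s) s (b - u) u n = (e n + e' n)%N by rewrite he mnmDE.
have := cmp iX0; have := cmp iX1; have := cmp iY0; have := cmp iY1; rewrite !mon4E => *.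
have E : e = base_mono a b by apply: mnm4P; rewrite /base_mono !mon4E; lia.
by move: ein; rewrite E mcoeff_msupp hc eqxx.
Qed.

Lemma fat_coef_mulG a b y h : y \in fat_cond ->
  fat_coef a b y (h * G) = (h \mPo chart0)@_(base_mono a b) * fat_coef a b y (base_lift a b * G).
Proof.
move=> yA; set c := (h \mPo chart0)@_(base_mono a b).
rewrite -(subrK (c *: base_lift a b) h) mulrDl -scalerAl fat_coefD fat_coefZ.
rewrite fat_coef_mulG_eq0 ?add0r //.
by rewrite rmorphB /= comp_mpolyZ mcoeffB mcoeffZ chart_base_lift mcoeffX eqxx mulr1 subrr.
Qed.

Lemma fat_coef_base_lift a b : (a0 <= a)%N -> (b0 <= b)%N ->
  exists2 x0, x0 \in fat_cond & fat_coef a b x0 (base_lift a b * G) != 0.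
Proof.
move=> ha hb; have [e ein he] := separator_exact_order.
have [hX hY] := chart_bihom (P := Pt i j) HGhom ein.
have hs : (e iX1 < mmax)%N by have := m_le_mmax i j; lia.
have hu : (e iY1 < mmax)%N by have := m_le_mmax i j; lia.
exists ((i, j), (Ordinal hs, Ordinal hu)); first by rewrite inE /= Hij /=; lia.
rewrite /fat_coef /chart_coef /= rmorphM /= chart_base_lift.
have -> : mon4 (a - e iX1) (e iX1) (b - e iY1) (e iY1) = (base_mono a b + e)%MM.
  by apply: mnm4P; rewrite !mnmDE /base_mono !mon4E; lia.
by rewrite mulrC mcoeffMX -mcoeff_msupp.
Qed.

Lemma quot_dim_sep_ideal a b : (deg_bound + a0 <= a)%N -> (deg_bound + b0 <= b)%N ->
  quot_dim sep_ideal a b ((\sum_(p in D) 'C(m p.1 p.2 + 1, 2)) - 1)%N.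
Proof.
move=> ha hb; rewrite -card_fat_cond.
have [F hF] := fat_dual_basis (leq_trans (leq_addr _ _) ha) (leq_trans (leq_addr _ _) hb).
have [x0 x0A w0] := fat_coef_base_lift (leq_trans (leq_addl _ _) ha) (leq_trans (leq_addl _ _) hb).
apply: (@quot_dim_dual_basis_line _ _ a b _ _ F fat_ideal sep_ideal _ x0
  (@fat_coefD a b) (@fat_coefZ a b) hF _ x0A w0).
- by apply: bihom_eqdeg (bihomM (base_lift_bihom (a := a) (b := b)) HGhom) _ _; lia.
- by move=> f hf x; exact: fat_coef_ideal.
- exact: ideal_fat_coef.
- move=> _ [g [h [hg ->]]]; exists ((h \mPo chart0)@_(base_mono a b)) => x xA.
  by rewrite fat_coefD fat_coef_ideal // add0r fat_coef_mulG.
- by move=> f c hf; exists f, (c *: base_lift a b); rewrite scalerAl.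
Qed.

End Separator.

End FatPoints.

Theorem proposition2p10
  (K : fieldType) (charK0 : [pchar K] =i pred0)
  (r t : nat) (Q : 'I_r -> K * K) (R : 'I_t -> K * K)
  (* Q_i, R_j are points of P^1: nonzero and pairwise distinct *)
  (HQ0 : forall i, (Q i).1 != 0 \/ (Q i).2 != 0)
  (HR0 : forall j, (R j).1 != 0 \/ (R j).2 != 0)
  (HQd : forall i i', i != i' -> (Q i).1 * (Q i').2 != (Q i).2 * (Q i').1)
  (HRd : forall j j', j != j' -> (R j).1 * (R j').2 != (R j).2 * (R j').1)
  (D : {set 'I_r * 'I_t})
  (* pi_1(X) = {Q_1..Q_r}, pi_2(X) = {R_1..R_t} *)
  (HDr : forall i, exists j, (i, j) \in D)
  (HDt : forall j, exists i, (i, j) \in D)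
  (m : 'I_r -> 'I_t -> nat) (Hm : forall i j, (0 < m i j)%N)
  (i : 'I_r) (j : 'I_t) (Hij : (i, j) \in D)
  (G : {mpoly K[4]})
  (HGhom : exists a b, bihom G a b)
  (HG1 : in_pt_pow (Q i, R j) (m i j - 1) G)
  (HG2 : ~ in_pt_pow (Q i, R j) (m i j) G)
  (HG3 : forall k l, (k, l) \in D -> (k, l) != (i, j) -> in_pt_pow (Q k, R l) (m k l) G) :
  let IY := fun f : {mpoly K[4]} =>
    forall k l, (k, l) \in D -> in_pt_pow (Q k, R l) (m k l) f in
  let J := fun f : {mpoly K[4]} => exists g h, IY g /\ f = g + h * G in
  let degY := (\sum_(p in D) 'C(m p.1 p.2 + 1, 2))%N in
  scheme_degree IY degY /\
  (forall f, IY f -> J f) /\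
  scheme_degree J (degY - 1).
Proof.
move=> IY J degY; have [a0 [b0 hG]] := HGhom.
split; [|split].
- exists (deg_bound m) => a b ha hb.
  exact: (quot_dim_fat_ideal HQ0 HR0 HQd HRd D ha hb).
- by move=> f hf; exists f, 0; rewrite mul0r addr0.
- exists (deg_bound m + a0 + b0)%N => a b ha hb.
  by apply: (quot_dim_sep_ideal HQ0 HR0 HQd HRd Hij hG HG1 HG2 HG3 (Hm i j)); lia.
Qed.
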